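(* Consider the D2D channel assignment game described in the context, with utilities $\hat U^N_i(a)=\frac1N\sum_{k=1}^N\hat U_{i,k}(a)$, where each $\hat U_{i,k}(a)$ is an independent copy of $$\hat U_i(a)=\sum_{j\in\mathcal{D}(a_i)}\hat\nu_j(a_i,a_{-i})-\sum_{j\in\mathcal{D}(a_i)\setminus\{i\}}\hat\nu^{(-i)}_j(a_{-i}).$$ Then this game is a noisy potential game with potential $\phi(a)=\mathbb{E}\big[\sum_{j\in\mathcal{D}}\hat\nu_j(a)\big]$, i.e. with $U_i=\mathbb{E}[\hat U^N_i]$, for all $i\in\mathcal{D}$, $a_i,a_i'\in\mathcal{F}$, $a_{-i}\in\mathcal{F}^{|\mathcal{D}|-1}$: $U_i(a_i,a_{-i})-U_i(a_i',a_{-i})=\phi(a_i,a_{-i})-\phi(a_i',a_{-i})$.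
   Context: A finite set $\mathcal{D}$ of users (players) and a finite set $\mathcal{F}$ of orthogonal channels; each player's action set is $X_i=\mathcal{F}$, and an action profile $a=(a_i,a_{-i})\in\mathcal{F}^{|\mathcal{D}|}$ assigns one channel to each user. $\mathcal{D}(a_i)=\{j\in\mathcal{D}:a_j=a_i\}$ is the set of users on the same channel as $i$. User $j$ on channel $c$ has SINR $\gamma_j=P_jg_j/(\sum_{l\in\mathcal{D}(c)\setminus\{j\}}P_lg_{l,j}+P_0)$ with transmit powers $P_l>0$, noise power $P_0>0$, and random channel power gains $g_j,g_{l,j}$; its measured (random) data rate is $\hat\nu_j(a)=W_c\log_2(1+\gamma_j)$, assumed to have finite expectation. $\hat\nu^{(-i)}_j(a_{-i})$ denotes the measured rate of user $j$ when user $i$ does not transmit (so only users other than $i$ on $j$'s channel interfere). A game with random utilities $\hat U_i$ is a noisy potential game if the game with expected utilities $U_i=\mathbb{E}[\hat U_i]$ is an exact potential game. *)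

From mathcomp Require Import all_boot all_order all_algebra.
From mathcomp Require Import all_classical all_reals all_analysis.
Set Implicit Arguments. Unset Strict Implicit. Unset Printing Implicit Defensive.
Import Order.TTheory GRing.Theory Num.Theory.
Local Open Scope classical_set_scope.
Local Open Scope ring_scope.

Definition upd (D F : finType) (a : {ffun D -> F}) (i : D) (c : F) : {ffun D -> F} :=
  [ffun j => if j == i then c else a j].

(* SINR of user j under profile a when only the users in the set [act]
   transmit (besides j itself); interferers are active users on j's channel. *)
Definition sinr (R : realType) (Omega : Type) (D F : finType)
  (Pw : D -> R) (P0 : R) (g : D -> Omega -> R) (G : D -> D -> Omega -> R)
  (act : pred D) (a : {ffun D -> F}) (j : D) (w : Omega) : R :=
  Pw j * g j w /
  (\sum_(l | [&& l != j, a l == a j & act l]) Pw l * G l j w + P0).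

Definition rate (R : realType) (Omega : Type) (D F : finType) (W : F -> R)
  (Pw : D -> R) (P0 : R) (g : D -> Omega -> R) (G : D -> D -> Omega -> R)
  (act : pred D) (a : {ffun D -> F}) (j : D) (w : Omega) : R :=
  W (a j) * (ln (1 + sinr Pw P0 g G act a j w) / ln 2).

Definition nuhat (R : realType) (Omega : Type) (D F : finType) (W : F -> R)
  (Pw : D -> R) (P0 : R) (g : D -> Omega -> R) (G : D -> D -> Omega -> R)
  (a : {ffun D -> F}) (j : D) : Omega -> R :=
  rate W Pw P0 g G predT a j.

Definition nuhat_wo (R : realType) (Omega : Type) (D F : finType) (W : F -> R)
  (Pw : D -> R) (P0 : R) (g : D -> Omega -> R) (G : D -> D -> Omega -> R)
  (i : D) (a : {ffun D -> F}) (j : D) : Omega -> R :=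
  rate W Pw P0 g G (predC1 i) a j.

Definition Uhat (R : realType) (Omega : Type) (D F : finType) (W : F -> R)
  (Pw : D -> R) (P0 : R) (g : D -> Omega -> R) (G : D -> D -> Omega -> R)
  (i : D) (a : {ffun D -> F}) (w : Omega) : R :=
  \sum_(j | a j == a i) nuhat W Pw P0 g G a j w
  - \sum_(j | (a j == a i) && (j != i)) nuhat_wo W Pw P0 g G i a j w.

Definition ident_distr (R : realType) (d : measure_display) (T : measurableType d)
  (P : probability T R) (X Y : T -> R) : Prop :=
  forall B : set R, measurable B -> P (X @^-1` B) = P (Y @^-1` B).

Definition mutually_independent (R : realType) (d : measure_display)
  (T : measurableType d) (P : probability T R) (I : finType) (X : I -> T -> R) : Prop :=
  forall B : I -> set R, (forall k, measurable (B k)) ->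
    P (\bigcap_(k in [set: I]) (X k @^-1` B k)) = (\prod_(k : I) P (X k @^-1` B k))%E.

From mathcomp Require Import all_boot all_order all_algebra.
From mathcomp Require Import all_classical all_reals all_analysis.
From mathcomp Require Import measurable_realfun.
Import Order.TTheory GRing.Theory Num.Theory.
Local Open Scope ring_scope.

(* When user i is silent, the rates of the other users do not depend on a_i,
   and a user on a channel other than a_i gets the same rate whether or not i
   transmits.  Hence
     U^_i(a) = sum_j nu^_j(a) - sum_(j <> i) nu^(-i)_j(a_(-i)),
   whose second term does not depend on a_i.  Each copy U^_(i,k) has the law
   of U^_i, so the sample mean has expectation E[U^_i], and linearity of
   expectation turns the identity above into the potential property. *)

Section identically_distributed.
Context {d} {T : measurableType d} {R : realType} {P : probability T R}.

Lemma ident_distr_integral_comp {X Y : T -> R} {f : R -> \bar R} :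
  measurable_fun setT X -> measurable_fun setT Y ->
  measurable_fun [set: R] f ->
  ident_distr P X Y -> (forall y, 0 <= f y)%E ->
  (\int[P]_w f (X w) = \int[P]_w f (Y w))%E.
Proof.
move=> mX mY mf XY f0.
have f0' : {in setT, forall y, 0 <= f y}%E by move=> y _; exact: f0.
rewrite -[LHS](ge0_integral_pushforward mX P measurableT mf f0').
rewrite -[RHS](ge0_integral_pushforward mY P measurableT mf f0').
by apply: eq_measure_integral => B mB _; exact: XY.
Qed.

Lemma ident_distr_Lfun1 {X Y : T -> R} : measurable_fun setT X ->
  ident_distr P X Y -> Y \in Lfun P 1 -> X \in Lfun P 1.
Proof.
move=> mX XY /Lfun1_integrable /integrableP[/measurable_EFinP mY Yoo].
apply/Lfun1_integrable/integrableP; split; first exact/measurable_EFinP.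
have mnorm : measurable_fun [set: R] (fun y : R => `|y|%:E).
  by apply: measurableT_comp => //; exact: normr_measurable.
by move: Yoo; rewrite /= (ident_distr_integral_comp mX mY mnorm XY).
Qed.

Lemma ident_distr_expectation {X Y : T -> R} : measurable_fun setT X ->
  ident_distr P X Y -> Y \in Lfun P 1 -> ('E_P[X] = 'E_P[Y])%E.
Proof.
move=> mX XY LY.
have /Lfun1_integrable iX := ident_distr_Lfun1 mX XY LY.
have /Lfun1_integrable iY := LY.
have [/measurable_EFinP mY _] := integrableP _ _ _ iY.
have mEFin : measurable_fun [set: R] (@EFin R) by exact: EFin_measurable.
rewrite !unlock -[LHS](integral_pushforward mX mEFin iX measurableT).
rewrite -[RHS](integral_pushforward mY mEFin iY measurableT).
by apply: eq_measure_integral => B mB _; exact: XY.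
Qed.

Lemma expectation_sample_mean {n} {X : 'I_n -> T -> R} {Y : T -> R} :
  (0 < n)%N -> (forall k, measurable_fun setT (X k)) ->
  (forall k, ident_distr P (X k) Y) -> Y \in Lfun P 1 ->
  ('E_P[(fun w => n%:R^-1 * \sum_(k < n) X k w)%R] = 'E_P[Y])%E.
Proof.
move=> n_gt0 mX XY LY.
have LX k : X k \in Lfun P 1 := ident_distr_Lfun1 (mX k) (XY k) LY.
have -> : (fun w => n%:R^-1 * \sum_(k < n) X k w) =
          n%:R^-1 \o* \sum_(k < n) X k.
  by apply/funext => w /=; rewrite fct_sumE mulrC.
rewrite expectationZl ?rpred_sum // -(big_map X predT id).
rewrite expectation_sum ?big_map; last by move=> _ /mapP[k _ ->].
under eq_bigr do rewrite (ident_distr_expectation (mX _) (XY _) LY).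
rewrite -(fineK (expectation_fin_num LY)) sumEFin sumr_const card_ord -EFinM.
by congr EFin; rewrite -[fine _ *+ n]mulr_natl mulKf // pnatr_eq0 -lt0n.
Qed.
End identically_distributed.

Section channel_game.
Context (R : realType) (Omega : Type) (D F : finType) (W : F -> R)
  (Pw : D -> R) (P0 : R) (g : D -> Omega -> R) (G : D -> D -> Omega -> R).

Local Notation nu := (nuhat W Pw P0 g G).
Local Notation nu_wo := (nuhat_wo W Pw P0 g G).
Local Notation Uh := (Uhat W Pw P0 g G).

Lemma nuhat_wo_upd i a c j : j != i -> nu_wo i (upd a i c) j = nu_wo i a j.
Proof.
move=> ji; apply/funext => w; rewrite /nuhat_wo /rate /sinr !ffunE (negbTE ji).
congr (_ * (ln (1 + _ / (_ + _)) / _)); apply: eq_bigl => l /=.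
by rewrite !ffunE; case: (eqVneq l i) => [->|]; rewrite ?andbF.
Qed.

Lemma nuhat_off_channel {i} {b : {ffun D -> F}} {j} :
  b j != b i -> nu b j = nu_wo i b j.
Proof.
move=> bji; apply/funext => w; rewrite /nuhat /nuhat_wo /rate /sinr.
congr (_ * (ln (1 + _ / (_ + _)) / _)); apply: eq_bigl => l /=.
case: (eqVneq l i) => [->|]; rewrite /= ?andbT ?andbF //.
by rewrite (eq_sym (b i)) (negbTE bji) andbF.
Qed.

Lemma UhatE i (b : {ffun D -> F}) w :
  Uh i b w = \sum_j nu b j w - \sum_(j | j != i) nu_wo i b j w.
Proof.
rewrite /Uhat [in RHS](bigID (fun j => b j == b i)) /=.
rewrite [X in _ = _ - X](bigID (fun j => b j == b i)) /=.
have -> : \sum_(j | (j != i) && (b j != b i)) nu_wo i b j w =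
          \sum_(j | b j != b i) nu b j w.
  apply: eq_big => [j|j /andP[_ bji]]; last by rewrite (nuhat_off_channel bji).
  by case: (eqVneq j i) => [->|]; rewrite ?eqxx.
have -> : \sum_(j | (j != i) && (b j == b i)) nu_wo i b j w =
          \sum_(j | (b j == b i) && (j != i)) nu_wo i b j w.
  by apply: eq_bigl => j; rewrite andbC.
by rewrite opprD addrACA subrr addr0.
Qed.

Lemma Uhat_upd i a c :
  Uh i (upd a i c) = \sum_j nu (upd a i c) j - \sum_(j | j != i) nu_wo i a j.
Proof.
apply/funext => w; rewrite UhatE !fct_sumE.
by congr (_ - _); apply: eq_bigr => j ji; rewrite nuhat_wo_upd.
Qed.

End channel_game.

Theorem proposition1 (R : realType) (d : measure_display) (Omega : measurableType d)
  (P : probability Omega R) (D F : finType)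
  (W : F -> R) (Pw : D -> R) (P0 : R)
  (g : D -> Omega -> R) (G : D -> D -> Omega -> R)
  (N : nat) (Uk : 'I_N -> D -> {ffun D -> F} -> Omega -> R) :
  (forall c, 0 < W c) -> (forall j, 0 < Pw j) -> 0 < P0 ->
  (forall j, measurable_fun setT (g j)) ->
  (forall l j, measurable_fun setT (G l j)) ->
  (forall j w, 0 <= g j w) -> (forall l j w, 0 <= G l j w) ->
  (forall a j, P.-integrable setT (EFin \o nuhat W Pw P0 g G a j)) ->
  (forall i a j, P.-integrable setT (EFin \o nuhat_wo W Pw P0 g G i a j)) ->
  (0 < N)%N ->
  (forall k i a, measurable_fun setT (Uk k i a)) ->
  (forall k i a, ident_distr P (Uk k i a) (Uhat W Pw P0 g G i a)) ->
  (forall i a, mutually_independent P (fun k => Uk k i a)) ->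
  let U i a := ('E_P[(fun w => N%:R^-1 * \sum_(k < N) Uk k i a w)%R])%E in
  let phi a := ('E_P[(fun w => \sum_(j : D) nuhat W Pw P0 g G a j w)%R])%E in
  forall (i : D) (a : {ffun D -> F}) (c c' : F),
    (U i (upd a i c) - U i (upd a i c') = phi (upd a i c) - phi (upd a i c'))%E.
Proof.
move=> _ _ _ _ _ _ _ int_nu int_nu_wo N_gt0 mUk idUk _ U phi i a c c'.
have L_nu b j : nuhat W Pw P0 g G b j \in Lfun P 1 by exact/Lfun1_integrable.
have L_nu_wo j : nuhat_wo W Pw P0 g G i a j \in Lfun P 1.
  exact/Lfun1_integrable.
have L_Uhat c0 : Uhat W Pw P0 g G i (upd a i c0) \in Lfun P 1.
  by rewrite Uhat_upd rpredB ?rpred_sum.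
have U_upd c0 : U i (upd a i c0) = 'E_P[Uhat W Pw P0 g G i (upd a i c0)]%E.
  exact: expectation_sample_mean N_gt0 (fun k => mUk k i _)
    (fun k => idUk k i _) (L_Uhat c0).
have phiE b : phi b = 'E_P[\sum_j nuhat W Pw P0 g G b j]%E.
  by congr (expectation P _); apply/funext => w; rewrite fct_sumE.
rewrite !U_upd !phiE -!expectationB ?rpred_sum //.
congr (expectation P _); apply/funext => w /=.
by rewrite !Uhat_upd opprB addrA subrK.
Qed.
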